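(* Let $A\in\mathscr{D}\mathrm{iag}$ with $L(A)>0$. There are constants $\delta=\delta(A)>0$, $c=c(A)>0$ and $C=C(A)<\infty$ such that if $D\in\mathscr{D}\mathrm{iag}$ with $d(D,A)<\delta$, then $$\mathbb{P}\Big[\Big|\tfrac1n\log\|D^{(n)}\|-L(D)\Big|>\varepsilon\Big]\le e^{-c\varepsilon^2n}$$ for all $\varepsilon>0$ and all $n\ge C/\varepsilon$.
   Context: $\mathrm{SL}_2(\mathbb{R})$ denotes real $2\times2$ matrices with determinant $\pm1$. $\Sigma=\{1,\dots,k\}$, $p$ a probability vector with positive entries, $X=\Sigma^{\mathbb{Z}}$, $\mathbb{P}=p^{\mathbb{Z}}$, $T$ the shift. A cocycle $D=(D_1,\dots,D_k)\in\mathrm{SL}_2(\mathbb{R})^k$ acts by $D(x)=D_{x_0}$ with iterates $D^{(n)}(x)=D_{x_{n-1}}\cdots D_{x_0}$; $d(A,D)=\max_j\|A_j-D_j\|$; $L(D)$ is the a.s. limit of $\frac1n\log\|D^{(n)}(x)\|$. $\mathscr{D}\mathrm{iag}$ is the set of cocycles in $\mathrm{SL}_2(\mathbb{R})^k$ admitting two transversal lines each invariant under all $D_j$. *)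

From HB Require Import structures.
From mathcomp Require Import all_boot all_order all_algebra.
From mathcomp Require Import all_classical all_reals all_analysis.
Set Implicit Arguments. Unset Strict Implicit. Unset Printing Implicit Defensive.
Import Order.TTheory GRing.Theory Num.Theory.
Import numFieldNormedType.Exports.
Local Open Scope classical_set_scope.
Local Open Scope ring_scope.

Section Defs.
Variable R : realType.

Definition vnorm (v : 'cV[R]_2) : R :=
  Num.sqrt (v ord0 ord0 ^+ 2 + v (lift ord0 ord0) ord0 ^+ 2).

Definition opnorm (M : 'M[R]_2) : R :=
  sup [set vnorm (M *m v) | v in [set v : 'cV[R]_2 | vnorm v = 1]].

(* SL_2(R) in the paper's sense: determinant +1 or -1. *)
Definition SL2 (M : 'M[R]_2) : Prop := \det M = 1 \/ \det M = -1.

Definition is_cocycle (k : nat) (D : 'I_k -> 'M[R]_2) : Prop :=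
  forall j, SL2 (D j).

Definition cdist (k : nat) (A D : 'I_k -> 'M[R]_2) : R :=
  \big[Order.max/0]_(j < k) opnorm (A j - D j).

Definition inv_line (M : 'M[R]_2) (u : 'cV[R]_2) : Prop :=
  exists a : R, M *m u = a *: u.

Definition Diag (k : nat) (D : 'I_k -> 'M[R]_2) : Prop :=
  is_cocycle D /\
  exists u v : 'cV[R]_2, \det (row_mx u v) != 0 /\
    forall j, inv_line (D j) u /\ inv_line (D j) v.

(* D^{(n)}(x) = D_{x_{n-1}} ... D_{x_0} for the word w = (x_0, ..., x_{n-1}). *)
Definition cprod (k : nat) (D : 'I_k -> 'M[R]_2) (w : seq 'I_k) : 'M[R]_2 :=
  foldl (fun M j => D j *m M) 1%:M w.

(* Bernoulli weight of a cylinder [x_0 .. x_{n-1} = w]. *)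
Definition wprob (k : nat) (p : 'I_k -> R) (w : seq 'I_k) : R :=
  \prod_(i <- w) p i.

Definition Pn (k : nat) (p : 'I_k -> R) (n : nat) (E : n.-tuple 'I_k -> bool) : R :=
  \sum_(w : n.-tuple 'I_k | E w) wprob p w.

Definition En (k : nat) (p : 'I_k -> R) (n : nat) (f : n.-tuple 'I_k -> R) : R :=
  \sum_(w : n.-tuple 'I_k) wprob p w * f w.

(* Lyapunov exponent L(D) = lim_n (1/n) E[log ||D^{(n)}||]
   (equal to the a.s. limit by Furstenberg--Kesten). *)
Definition Lyap (k : nat) (p : 'I_k -> R) (D : 'I_k -> 'M[R]_2) : R :=
  limn (fun n : nat => n.+1%:R^-1 * En p (fun w : n.+1.-tuple 'I_k => ln (opnorm (cprod D w)))).

End Defs.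

From HB Require Import structures.
From mathcomp Require Import all_boot all_order all_algebra.
From mathcomp Require Import all_classical all_reals all_analysis.
From mathcomp Require Import ring lra.
Import Order.TTheory GRing.Theory Num.Theory.
Import numFieldNormedType.Exports.
Local Open Scope ring_scope.
Set Implicit Arguments. Unset Strict Implicit. Unset Printing Implicit Defensive.

(* A cocycle in Diag has common eigenvectors u, v with D_j u = a_j u, D_j v = b_j v
   and |a_j b_j| = 1, so log ||D^(n)(x)|| is |S_n| up to an additive constant
   ln (2 K), where S_n = sum_i ln |a_(x_i)| is a random walk with bounded i.i.d.
   steps and K = |u| |v| / |det (u, v)|.  Hence L(D) = |E ln |a_(x_0)||, and the
   deviation bound is a concentration inequality for S_n: Hoeffding's bound for
   large deviations, and a discrete Stein bound
   P(|S_n| > y + W) (n W^2 + y^2) <= n W^2 for small ones, where Hoeffding's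
   factor 2 would be fatal.  Uniformity near A: L(A) > 0 forces some A_j to have
   eigenvalues of distinct moduli; for D near A the determinant of D_j is still
   det A_j (it is +-1) and its trace is close, so the eigenvalue gap of D_j stays
   bounded below, and the gap controls K. *)

Section Plane.
Variable R : realType.
Implicit Types (u v w : 'cV[R]_2) (M N : 'M[R]_2) (a b : R).

Definition i1 : 'I_2 := lift ord0 ord0.
Definition vx v := v ord0 ord0.
Definition vy v := v i1 ord0.
Definition det2 u v := vx u * vy v - vy u * vx v.
Definition vec2 a b : 'cV[R]_2 := \col_i (if i == ord0 then a else b).

Lemma ord2P (i : 'I_2) : i = ord0 \/ i = i1.
Proof. by case: i => [[|[|m]] Hi]; [left; exact/val_inj | right; exact/val_inj |]. Qed.

Lemma cV2P u v : vx u = vx v -> vy u = vy v -> u = v.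
Proof.
move=> hx hy; apply/matrixP => i j; rewrite [j]ord1.
by case: (ord2P i) => ->.
Qed.

Lemma vx_vec2 a b : vx (vec2 a b) = a. Proof. by rewrite /vx mxE eqxx. Qed.
Lemma vy_vec2 a b : vy (vec2 a b) = b. Proof. by rewrite /vy mxE. Qed.
Lemma vxD u v : vx (u + v) = vx u + vx v. Proof. by rewrite /vx mxE. Qed.
Lemma vyD u v : vy (u + v) = vy u + vy v. Proof. by rewrite /vy mxE. Qed.
Lemma vxZ a v : vx (a *: v) = a * vx v. Proof. by rewrite /vx mxE. Qed.
Lemma vyZ a v : vy (a *: v) = a * vy v. Proof. by rewrite /vy mxE. Qed.

Lemma vx_mulmx M v : vx (M *m v) = M ord0 ord0 * vx v + M ord0 i1 * vy v.
Proof. by rewrite /vx mxE !big_ord_recl big_ord0 addr0. Qed.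

Lemma vy_mulmx M v : vy (M *m v) = M i1 ord0 * vx v + M i1 i1 * vy v.
Proof. by rewrite /vy mxE !big_ord_recl big_ord0 addr0. Qed.

Lemma det_mx22 M : \det M = M ord0 ord0 * M i1 i1 - M ord0 i1 * M i1 ord0.
Proof.
rewrite (expand_det_row _ ord0) !big_ord_recl big_ord0 /cofactor !det_mx11 !mxE /=.
have -> : lift (lift ord0 ord0) (0 : 'I_1) = ord0 :> 'I_2 by apply/val_inj.
have -> : lift ord0 (0 : 'I_1) = i1 :> 'I_2 by apply/val_inj.
rewrite /= expr0 expr1; ring.
Qed.

Lemma mxtrace22 M : \tr M = M ord0 ord0 + M i1 i1.
Proof. by rewrite /mxtrace !big_ord_recl big_ord0 addr0. Qed.

Lemma det_row_mx u v : \det (row_mx u v) = det2 u v.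
Proof.
have col0 i : row_mx u v i ord0 = u i ord0.
  by rewrite -(row_mxEl u v i ord0); congr (row_mx u v i _); apply/val_inj.
have col1 i : row_mx u v i i1 = v i ord0.
  by rewrite -(row_mxEr u v i ord0); congr (row_mx u v i _); apply/val_inj.
rewrite det_mx22 !col0 !col1 /det2 /vx /vy; ring.
Qed.

Lemma det2C u v : det2 v u = - det2 u v.
Proof. rewrite /det2; ring. Qed.

Lemma det2Zl a u v : det2 (a *: u) v = a * det2 u v.
Proof. rewrite /det2 !vxZ !vyZ; ring. Qed.

Lemma det2Zr a u v : det2 u (a *: v) = a * det2 u v.
Proof. rewrite /det2 !vxZ !vyZ; ring. Qed.

Lemma det2_cramer u v w : det2 u v *: w = det2 w v *: u + det2 u w *: v.
Proof. apply: cV2P; rewrite ?vxD ?vyD ?vxZ ?vyZ /det2; ring. Qed.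

Lemma det2_mulmx M u v : det2 (M *m u) (M *m v) = \det M * det2 u v.
Proof. rewrite /det2 !vx_mulmx !vy_mulmx det_mx22; ring. Qed.

Lemma det2_mulmx_trace M u v :
  det2 (M *m u) v + det2 u (M *m v) = \tr M * det2 u v.
Proof. rewrite /det2 !vx_mulmx !vy_mulmx mxtrace22; ring. Qed.

Lemma eigen_det_trace M u v a b : det2 u v != 0 ->
  M *m u = a *: u -> M *m v = b *: v -> a * b = \det M /\ a + b = \tr M.
Proof.
move=> huv hu hv; split; apply: (mulIf huv).
  by rewrite -det2_mulmx hu hv det2Zl det2Zr mulrA.
by rewrite -det2_mulmx_trace hu hv det2Zl det2Zr mulrDl.
Qed.

Lemma vnormE v : vnorm v = Num.sqrt (vx v ^+ 2 + vy v ^+ 2). Proof. by []. Qed.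

Lemma vnorm_ge0 v : 0 <= vnorm v. Proof. exact: sqrtr_ge0. Qed.

Lemma vnorm_sqr v : vnorm v ^+ 2 = vx v ^+ 2 + vy v ^+ 2.
Proof. by rewrite sqr_sqrtr // addr_ge0 // sqr_ge0. Qed.

Lemma normr_le_sqr a b : 0 <= b -> a ^+ 2 <= b ^+ 2 -> `|a| <= b.
Proof. by move=> b0; rewrite -real_normK ?num_real // ler_sqr ?nnegrE. Qed.

Lemma vnorm_le v b : 0 <= b -> vx v ^+ 2 + vy v ^+ 2 <= b ^+ 2 -> vnorm v <= b.
Proof.
by move=> b0; rewrite -vnorm_sqr => /(normr_le_sqr b0); rewrite ger0_norm ?vnorm_ge0.
Qed.

Lemma vx_le_vnorm v : `|vx v| <= vnorm v.
Proof. by apply: normr_le_sqr; rewrite ?vnorm_ge0 // vnorm_sqr lerDl sqr_ge0. Qed.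

Lemma vy_le_vnorm v : `|vy v| <= vnorm v.
Proof. by apply: normr_le_sqr; rewrite ?vnorm_ge0 // vnorm_sqr lerDr sqr_ge0. Qed.

Lemma vnormZ a v : vnorm (a *: v) = `|a| * vnorm v.
Proof.
by rewrite !vnormE vxZ vyZ !exprMn -mulrDr sqrtrM ?sqr_ge0 ?sqrtr_sqr.
Qed.

Lemma vnorm_eq0 v : vnorm v = 0 -> v = 0.
Proof.
move=> v0; have := vnorm_sqr v; rewrite v0 expr0n /= => /esym/eqP.
rewrite paddr_eq0 ?sqr_ge0 // !sqrf_eq0 => /andP[/eqP hx /eqP hy].
by apply: cV2P; rewrite /vx /vy in hx hy *; rewrite ?hx ?hy !mxE.
Qed.

Lemma lagrange_identity u v :
  (vx u * vx v + vy u * vy v) ^+ 2 + det2 u v ^+ 2 = vnorm u ^+ 2 * vnorm v ^+ 2.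
Proof. rewrite !vnorm_sqr /det2; ring. Qed.

Lemma dot2_le_vnorm u v : vx u * vx v + vy u * vy v <= vnorm u * vnorm v.
Proof.
apply: le_trans (ler_norm _) _; apply: normr_le_sqr; first by rewrite mulr_ge0 ?vnorm_ge0.
by rewrite exprMn -lagrange_identity lerDl sqr_ge0.
Qed.

Lemma det2_le_vnorm u v : `|det2 u v| <= vnorm u * vnorm v.
Proof.
apply: normr_le_sqr; first by rewrite mulr_ge0 ?vnorm_ge0.
by rewrite exprMn -lagrange_identity lerDr sqr_ge0.
Qed.

Lemma vnormD u v : vnorm (u + v) <= vnorm u + vnorm v.
Proof.
apply: vnorm_le; first by rewrite addr_ge0 ?vnorm_ge0.
have := dot2_le_vnorm u v; have := vnorm_sqr u; have := vnorm_sqr v.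
rewrite vxD vyD; nra.
Qed.

Lemma vnormB u v : vnorm (u - v) <= vnorm u + vnorm v.
Proof. by rewrite -scaleN1r; apply: le_trans (vnormD _ _) _; rewrite vnormZ normrN1 mul1r. Qed.

Lemma vnorm_gt0_det2l u v : det2 u v != 0 -> 0 < vnorm u.
Proof.
apply: contraNT; rewrite -leNgt => u0; have {u0} -> : u = 0.
  by apply: vnorm_eq0; apply/eqP; rewrite eq_le u0 vnorm_ge0.
by rewrite /det2 /vx /vy !mxE !mul0r subr0.
Qed.

Lemma vnorm_gt0_det2r u v : det2 u v != 0 -> 0 < vnorm v.
Proof. by rewrite -oppr_eq0 -det2C; apply: vnorm_gt0_det2l. Qed.

End Plane.

Section OperatorNorm.
Variable R : realType.
Implicit Types (u v w : 'cV[R]_2) (M N : 'M[R]_2) (a b : R).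

Let e0 : 'cV[R]_2 := vec2 1 0.
Let e1 : 'cV[R]_2 := vec2 0 1.

Lemma vnorm_e0 : vnorm e0 = 1.
Proof. by rewrite vnormE vx_vec2 vy_vec2 expr1n expr0n addr0 sqrtr1. Qed.

Lemma vnorm_e1 : vnorm e1 = 1.
Proof. by rewrite vnormE vx_vec2 vy_vec2 expr1n expr0n add0r sqrtr1. Qed.

Lemma has_sup_opnorm M :
  has_sup [set vnorm (M *m v) | v in [set v : 'cV[R]_2 | vnorm v = 1]]%classic.
Proof.
split; first by exists (vnorm (M *m e0)), e0; rewrite /= ?vnorm_e0.
exists (`|M ord0 ord0| + `|M ord0 i1| + (`|M i1 ord0| + `|M i1 i1|)).
move=> _ [v /= v1 <-].
have entry_bound (c d : R) : `|c * vx v + d * vy v| <= `|c| + `|d|.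
  apply: le_trans (ler_normD _ _) _; rewrite !normrM.
  have := vx_le_vnorm v; have := vy_le_vnorm v; rewrite v1 => hy hx.
  by apply: lerD; rewrite -[X in _ <= X]mulr1; apply: ler_wpM2l.
have vnorm_le_coords w : vnorm w <= `|vx w| + `|vy w|.
  apply: vnorm_le; first by rewrite addr_ge0.
  rewrite -[vx w ^+ 2]real_normK ?num_real // -[vy w ^+ 2]real_normK ?num_real //.
  by have := normr_ge0 (vx w); have := normr_ge0 (vy w); nra.
apply: le_trans (vnorm_le_coords _) _; rewrite vx_mulmx vy_mulmx.
by apply: lerD; apply: entry_bound.
Qed.

Lemma vnorm_mulmx_le_opnorm M v : vnorm v = 1 -> vnorm (M *m v) <= opnorm M.
Proof. by move=> v1; apply: (sup_upper_bound (has_sup_opnorm M)); exists v. Qed.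

Lemma opnorm_ge0 M : 0 <= opnorm M.
Proof. exact: le_trans (vnorm_ge0 _) (vnorm_mulmx_le_opnorm M vnorm_e0). Qed.

Lemma vnorm_mulmx M v : vnorm (M *m v) <= opnorm M * vnorm v.
Proof.
have [v0|v_neq0] := eqVneq (vnorm v) 0.
  by rewrite v0 mulr0 (vnorm_eq0 v0) mulmx0 -(vnorm_eq0 v0) v0.
have v_gt0 : 0 < vnorm v by rewrite lt_neqAle eq_sym v_neq0 vnorm_ge0.
have v1 : vnorm ((vnorm v)^-1 *: v) = 1.
  by rewrite vnormZ ger0_norm ?invr_ge0 ?vnorm_ge0 // mulVf.
have := vnorm_mulmx_le_opnorm M v1.
by rewrite -scalemxAr vnormZ ger0_norm ?invr_ge0 ?vnorm_ge0 // ler_pdivrMl // mulrC.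
Qed.

Lemma opnorm_le M b :
  0 <= b -> (forall v, vnorm (M *m v) <= b * vnorm v) -> opnorm M <= b.
Proof.
move=> b0 hM; apply: ge_sup; first by exists (vnorm (M *m e0)), e0; rewrite /= ?vnorm_e0.
by move=> _ [v /= v1 <-]; have := hM v; rewrite v1 mulr1.
Qed.

Lemma opnormD M N : opnorm (M + N) <= opnorm M + opnorm N.
Proof.
apply: opnorm_le; first by rewrite addr_ge0 ?opnorm_ge0.
move=> v; rewrite mulmxDl mulrDl; apply: le_trans (vnormD _ _) _.
by apply: lerD; apply: vnorm_mulmx.
Qed.

Lemma opnormB_scalar M a : opnorm (M - a%:M) <= opnorm M + `|a|.
Proof.
apply: opnorm_le; first by rewrite addr_ge0 ?opnorm_ge0.
move=> v; rewrite mulmxBl mul_scalar_mx mulrDl; apply: le_trans (vnormB _ _) _.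
by apply: lerD; rewrite ?vnormZ ?vnorm_mulmx.
Qed.

Lemma entry_le_opnorm M i j : `|M i j| <= opnorm M.
Proof.
have col_le v : vnorm v = 1 ->
    `|vx (M *m v)| <= opnorm M /\ `|vy (M *m v)| <= opnorm M.
  by move=> v1; split; apply: le_trans (vnorm_mulmx_le_opnorm M v1);
    [exact: vx_le_vnorm | exact: vy_le_vnorm].
case: (ord2P j) => ->.
  have := col_le _ vnorm_e0; rewrite vx_mulmx vy_mulmx vx_vec2 vy_vec2.
  by rewrite !mulr1 !mulr0 !addr0; case: (ord2P i) => -> [].
have := col_le _ vnorm_e1; rewrite vx_mulmx vy_mulmx vx_vec2 vy_vec2.
by rewrite !mulr1 !mulr0 !add0r; case: (ord2P i) => -> [].
Qed.

Lemma eigen_le_opnorm M u a : M *m u = a *: u -> 0 < vnorm u -> `|a| <= opnorm M.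
Proof. by move=> hu u0; have := vnorm_mulmx M u; rewrite hu vnormZ ler_pM2r. Qed.

(* Decompose w in the eigenbasis by Cramer's rule and apply the Hadamard bound to
   each coordinate. *)
Lemma opnorm_eigenbasis_le M u v a b : det2 u v != 0 ->
  M *m u = a *: u -> M *m v = b *: v ->
  opnorm M <= (`|a| + `|b|) * (vnorm u * vnorm v / `|det2 u v|).
Proof.
move=> huv hu hv; have d_gt0 : 0 < `|det2 u v| by rewrite normr_gt0.
apply: opnorm_le; first by rewrite !mulr_ge0 ?addr_ge0 ?vnorm_ge0 ?invr_ge0.
move=> w.
have Mw : det2 u v *: (M *m w) = (det2 w v * a) *: u + (det2 u w * b) *: v.
  by rewrite scalemxAr det2_cramer mulmxDr -!scalemxAr hu hv !scalerA.
have := vnormD ((det2 w v * a) *: u) ((det2 u w * b) *: v).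
rewrite -Mw !vnormZ !normrM -ler_pdivlMl // => /le_trans; apply.
have -> : (`|a| + `|b|) * (vnorm u * vnorm v / `|det2 u v|) * vnorm w =
    `|det2 u v|^-1 * ((`|a| + `|b|) * (vnorm u * vnorm v) * vnorm w) by ring.
apply: ler_wpM2l; first by rewrite invr_ge0 ltW.
rewrite !mulrDl; apply: lerD.
- have -> : `|a| * (vnorm u * vnorm v) * vnorm w = vnorm w * vnorm v * `|a| * vnorm u.
    by ring.
  apply: ler_wpM2r; first exact: vnorm_ge0.
  by apply: ler_wpM2r => //; exact: det2_le_vnorm.
- have -> : `|b| * (vnorm u * vnorm v) * vnorm w = vnorm u * vnorm w * `|b| * vnorm v.
    by ring.
  apply: ler_wpM2r; first exact: vnorm_ge0.
  by apply: ler_wpM2r => //; exact: det2_le_vnorm.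
Qed.

(* Applied to M - a, which kills u, the vector orthogonal to u is sent to a
   multiple (b - a) of v; comparing norms bounds the eigenvalue gap times the
   condition number of the eigenbasis. *)
Lemma eigen_gap_le M u v a b : det2 u v != 0 ->
  M *m u = a *: u -> M *m v = b *: v ->
  `|b - a| * (vnorm u * vnorm v) <= `|det2 u v| * (2 * opnorm M).
Proof.
move=> huv hu hv; have u_gt0 := vnorm_gt0_det2l huv.
pose uT := vec2 (- vy u) (vx u).
have uuT : det2 u uT = vnorm u ^+ 2 by rewrite vnorm_sqr /det2 vx_vec2 vy_vec2; ring.
have vnorm_uT : vnorm uT = vnorm u.
  by rewrite !vnormE vx_vec2 vy_vec2 sqrrN addrC.
pose N := M - a%:M.
have Nu : N *m u = 0 by rewrite mulmxBl mul_scalar_mx hu subrr.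
have Nv : N *m v = (b - a) *: v by rewrite mulmxBl mul_scalar_mx hv scalerBl.
have NuT : (vnorm u ^+ 2 * (b - a)) *: v = det2 u v *: (N *m uT).
  have := congr1 (mulmx N) (det2_cramer u uT v).
  by rewrite mulmxDr -!scalemxAr Nu Nv scaler0 add0r uuT scalerA => <-.
have := congr1 (@vnorm R) NuT; rewrite !vnormZ normrM ger0_norm ?sqr_ge0 // => nE.
have := vnorm_mulmx N uT; rewrite vnorm_uT => NuT_le.
have N_le : opnorm N <= 2 * opnorm M.
  by apply: le_trans (opnormB_scalar M a) _; have := eigen_le_opnorm hu u_gt0; lra.
have lhsE : vnorm u * (`|b - a| * (vnorm u * vnorm v)) = `|det2 u v| * vnorm (N *m uT).
  by rewrite -nE; ring.
rewrite -(ler_pM2l u_gt0) lhsE mulrCA; apply: ler_wpM2l => //.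
apply: le_trans NuT_le _; rewrite mulrC; apply: ler_wpM2l => //; exact: vnorm_ge0.
Qed.

End OperatorNorm.

Section Eigenframe.
Variable R : realType.
Variable k : nat.
Implicit Types (D : 'I_k -> 'M[R]_2) (w : seq 'I_k).

Lemma cprod_eigen D (u : 'cV[R]_2) (a : 'I_k -> R) w : (forall j, D j *m u = a j *: u) ->
  cprod D w *m u = (\prod_(i <- w) a i) *: u.
Proof.
move=> hu; rewrite /cprod.
suff foldlE M c : M *m u = c *: u ->
    foldl (fun M j => D j *m M) M w *m u = (c * \prod_(i <- w) a i) *: u.
  by rewrite -[X in X *: u]mul1r; apply: foldlE; rewrite mul1mx scale1r.
elim: w M c => [|j w IHw] M c hM /=; first by rewrite big_nil mulr1.
rewrite big_cons mulrA; apply: IHw.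
by rewrite -mulmxA hM -scalemxAr hu scalerA mulrC.
Qed.

Record eigenframe D := EigenFrame {
  ef_u : 'cV[R]_2;
  ef_v : 'cV[R]_2;
  ef_a : 'I_k -> R;
  ef_b : 'I_k -> R;
  ef_det : det2 ef_u ef_v != 0;
  ef_eigen_u : forall j, D j *m ef_u = ef_a j *: ef_u;
  ef_eigen_v : forall j, D j *m ef_v = ef_b j *: ef_v;
  ef_ab : forall j, `|ef_a j * ef_b j| = 1 }.

Lemma Diag_eigenframe D : Diag D -> inhabited (eigenframe D).
Proof.
case=> hSL [u [v [huv hinv]]]; rewrite det_row_mx in huv.
have [a ha] := choice (fun j => proj1 (hinv j)).
have [b hb] := choice (fun j => proj2 (hinv j)).
have hab j : `|a j * b j| = 1.
  by have [-> _] := eigen_det_trace huv (ha j) (hb j); case: (hSL j) => ->;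
    rewrite ?normrN normr1.
exact: inhabits (EigenFrame huv ha hb hab).
Qed.

Section OneFrame.
Variables (D : 'I_k -> 'M[R]_2) (f : eigenframe D).

Definition ef_rate j := ln `|ef_a f j|.

Definition ef_cond := vnorm (ef_u f) * vnorm (ef_v f) / `|det2 (ef_u f) (ef_v f)|.

Lemma ef_a_neq0 j : ef_a f j != 0.
Proof.
by apply/eqP => a0; have := ef_ab f j; rewrite a0 mul0r normr0 => /eqP; rewrite eq_sym oner_eq0.
Qed.

Lemma ef_b_neq0 j : ef_b f j != 0.
Proof.
by apply/eqP => b0; have := ef_ab f j; rewrite b0 mulr0 normr0 => /eqP; rewrite eq_sym oner_eq0.
Qed.

Lemma ef_u_gt0 : 0 < vnorm (ef_u f). Proof. exact: vnorm_gt0_det2l (ef_det f). Qed.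
Lemma ef_v_gt0 : 0 < vnorm (ef_v f). Proof. exact: vnorm_gt0_det2r (ef_det f). Qed.

Lemma ef_cond_gt0 : 0 < ef_cond.
Proof. by rewrite !mulr_gt0 ?ef_u_gt0 ?ef_v_gt0 // invr_gt0 normr_gt0 ef_det. Qed.

Lemma ef_rate_b j : ln `|ef_b f j| = - ef_rate j.
Proof.
apply/eqP; rewrite -subr_eq0 opprK addrC -lnM ?posrE ?normr_gt0 ?ef_a_neq0 ?ef_b_neq0 //.
by rewrite -normrM ef_ab ln1.
Qed.

Lemma norm_prod_ef_a w : `|\prod_(i <- w) ef_a f i| = expR (\sum_(i <- w) ef_rate i).
Proof.
rewrite normr_prod expR_sum; apply: eq_bigr => j _.
by rewrite lnK // posrE normr_gt0 ef_a_neq0.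
Qed.

Lemma norm_prod_ef_b w : `|\prod_(i <- w) ef_b f i| = expR (- \sum_(i <- w) ef_rate i).
Proof.
rewrite normr_prod -sumrN expR_sum; apply: eq_bigr => j _.
by rewrite -ef_rate_b lnK // posrE normr_gt0 ef_b_neq0.
Qed.

Lemma ef_rate_le_ln_opnorm j : `|ef_rate j| <= ln (opnorm (D j)).
Proof.
have la := eigen_le_opnorm (ef_eigen_u f j) ef_u_gt0.
have lb := eigen_le_opnorm (ef_eigen_v f j) ef_v_gt0.
have a_gt0 : 0 < `|ef_a f j| by rewrite normr_gt0 ef_a_neq0.
have b_gt0 : 0 < `|ef_b f j| by rewrite normr_gt0 ef_b_neq0.
rewrite ler_norml lerNl -ef_rate_b.
by rewrite !ler_ln ?posrE ?la ?lb //; apply: lt_le_trans lb.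
Qed.

Lemma expR_le_opnorm_cprod w :
  expR `|\sum_(i <- w) ef_rate i| <= opnorm (cprod D w).
Proof.
have la := eigen_le_opnorm (cprod_eigen w (ef_eigen_u f)) ef_u_gt0.
have lb := eigen_le_opnorm (cprod_eigen w (ef_eigen_v f)) ef_v_gt0.
rewrite norm_prod_ef_a in la; rewrite norm_prod_ef_b in lb.
by case: (ler0P (\sum_(i <- w) ef_rate i)).
Qed.

Lemma ln_opnorm_cprod_ge w :
  `|\sum_(i <- w) ef_rate i| <= ln (opnorm (cprod D w)).
Proof.
have le_opnorm := expR_le_opnorm_cprod w.
rewrite -ler_expR lnK // posrE; exact: lt_le_trans (expR_gt0 _) le_opnorm.
Qed.

Lemma ln_opnorm_cprod_le w :
  ln (opnorm (cprod D w)) <= `|\sum_(i <- w) ef_rate i| + ln (2 * ef_cond).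
Proof.
set S := \sum_(i <- w) ef_rate i.
have opnorm_gt0 : 0 < opnorm (cprod D w).
  exact: lt_le_trans (expR_gt0 _) (expR_le_opnorm_cprod w).
have cond_gt0 : 0 < 2 * ef_cond by rewrite mulr_gt0 ?ef_cond_gt0.
rewrite -ler_expR expRD lnK // lnK //.
apply: le_trans (opnorm_eigenbasis_le (ef_det f) (cprod_eigen w (ef_eigen_u f))
  (cprod_eigen w (ef_eigen_v f))) _.
rewrite norm_prod_ef_a norm_prod_ef_b -/ef_cond -/S.
have -> : expR `|S| * (2 * ef_cond) = (expR `|S| + expR `|S|) * ef_cond by ring.
apply: ler_wpM2r; first exact: ltW ef_cond_gt0.
by apply: lerD; rewrite ler_expR ?ler_norm // -normrN ler_norm.
Qed.

End OneFrame.
End Eigenframe.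

Section Perturbation.
Variable R : realType.
Implicit Types (M E : 'M[R]_2) (a d : R).

Lemma det_mx22_perturb M E a d :
  (forall i j, `|M i j| <= a) -> (forall i j, `|E i j| <= d) ->
  `|\det (M + E) - \det M| <= 2 * d * (2 * a + d).
Proof.
move=> hM hE; rewrite !det_mx22 !mxE.
have prod_le (x y b c : R) : `|x| <= b -> `|y| <= c -> - (b * c) <= x * y <= b * c.
  by move=> hx hy; rewrite -ler_norml normrM ler_pM.
have := prod_le _ _ _ _ (hM ord0 ord0) (hE i1 i1).
have := prod_le _ _ _ _ (hE ord0 ord0) (hM i1 i1).
have := prod_le _ _ _ _ (hE ord0 ord0) (hE i1 i1).
have := prod_le _ _ _ _ (hM ord0 i1) (hE i1 ord0).
have := prod_le _ _ _ _ (hE ord0 i1) (hM i1 ord0).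
have := prod_le _ _ _ _ (hE ord0 i1) (hE i1 ord0).
move=> /andP[? ?] /andP[? ?] /andP[? ?] /andP[? ?] /andP[? ?] /andP[? ?].
by rewrite ler_norml; apply/andP; split; lra.
Qed.

Lemma mxtrace22_perturb M E d : (forall i j, `|E i j| <= d) ->
  `|\tr (M + E) - \tr M| <= 2 * d.
Proof.
move=> hE; rewrite mxtraceD addrAC subrr add0r mxtrace22.
by apply: le_trans (ler_normD _ _) _; have := hE ord0 ord0; have := hE i1 i1; lra.
Qed.

Lemma SL2_det_eq M N : SL2 M -> SL2 N -> `|\det N - \det M| < 2 -> \det N = \det M.
Proof.
by case=> ->; case=> ->; rewrite ltr_norml => /andP[? ?] //; lra.
Qed.

End Perturbation.

Section NearCocycles.
Variable R : realType.
Variable k : nat.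
Implicit Types (D A : 'I_k -> 'M[R]_2).

Lemma opnorm_le_cdist D A j : opnorm (D j - A j) <= cdist D A.
Proof. exact: (le_bigmax _ (fun j => opnorm (D j - A j))). Qed.

Lemma entry_le_cdist D A j i l : `|(D j - A j) i l| <= cdist D A.
Proof. exact: le_trans (entry_le_opnorm _ i l) (opnorm_le_cdist D A j). Qed.

Lemma opnorm_near D A j : opnorm (D j) <= opnorm (A j) + cdist D A.
Proof.
rewrite -[D j](subrK (A j)) addrC; apply: le_trans (opnormD _ _) _.
by rewrite lerD2l opnorm_le_cdist.
Qed.

Lemma ef_gap_sqr D (f : eigenframe D) j :
  (ef_b f j - ef_a f j) ^+ 2 = \tr (D j) ^+ 2 - 4 * \det (D j).
Proof.
have [<- <-] := eigen_det_trace (ef_det f) (ef_eigen_u f j) (ef_eigen_v f j); ring.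
Qed.

Lemma ef_cond_gap_le D (f : eigenframe D) j :
  `|ef_b f j - ef_a f j| * ef_cond f <= 2 * opnorm (D j).
Proof.
have d_gt0 : 0 < `|det2 (ef_u f) (ef_v f)| by rewrite normr_gt0 ef_det.
have := eigen_gap_le (ef_det f) (ef_eigen_u f j) (ef_eigen_v f j).
by move=> gap; rewrite /ef_cond mulrA ler_pdivrMr // [X in _ <= X]mulrC.
Qed.

Lemma ef_rate_near D A (f : eigenframe D) j : cdist D A <= 1 ->
  `|ef_rate f j| <= ln (\sum_i opnorm (A i) + 1).
Proof.
move=> near; apply: le_trans (ef_rate_le_ln_opnorm f j) _.
have D_gt0 : 0 < opnorm (D j).
  apply: lt_le_trans (eigen_le_opnorm (ef_eigen_u f j) (ef_u_gt0 f)).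
  by rewrite normr_gt0 ef_a_neq0.
have Aj_le : opnorm (A j) <= \sum_i opnorm (A i).
  by rewrite (bigD1 j) //= lerDl sumr_ge0 // => i _; exact: opnorm_ge0.
have D_le : opnorm (D j) <= \sum_i opnorm (A i) + 1.
  by apply: le_trans (opnorm_near D A j) _; apply: lerD.
by rewrite ler_ln ?posrE //; apply: lt_le_trans D_le.
Qed.

Lemma ef_cond_le_gap D (f : eigenframe D) j s : 0 < s ->
  s ^+ 2 <= (ef_b f j - ef_a f j) ^+ 2 -> ef_cond f <= 2 * opnorm (D j) / s.
Proof.
move=> s_gt0 gap; rewrite ler_pdivlMr // mulrC.
apply: le_trans (ef_cond_gap_le f j); apply: ler_wpM2r; first exact: ltW (ef_cond_gt0 f).
by rewrite -ler_sqr ?nnegrE ?real_normK ?num_real ?normr_ge0 ?(ltW s_gt0).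
Qed.

Lemma det_near D A j : is_cocycle D -> is_cocycle A ->
  cdist D A <= 1 -> cdist D A * (2 * opnorm (A j) + 1) < 1 -> \det (D j) = \det (A j).
Proof.
move=> SL_D SL_A d_le1 d_small; apply: SL2_det_eq (SL_A j) (SL_D j) _.
have := det_mx22_perturb (entry_le_opnorm (A j)) (entry_le_cdist D A j).
rewrite subrKC => /le_lt_trans; apply.
have d_ge0 : 0 <= cdist D A := le_trans (normr_ge0 _) (entry_le_cdist D A j ord0 ord0).
have := opnorm_ge0 (A j); nra.
Qed.

Lemma disc_near D A j : \det (D j) = \det (A j) ->
  \tr (A j) ^+ 2 - 4 * \det (A j) - 8 * (opnorm (A j) * cdist D A) <=
  \tr (D j) ^+ 2 - 4 * \det (D j).
Proof.
move=> detE; rewrite detE.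
have trD := mxtrace22_perturb (A j) (entry_le_cdist D A j); rewrite subrKC in trD.
have trA : `|\tr (A j)| <= 2 * opnorm (A j).
  rewrite mxtrace22; apply: le_trans (ler_normD _ _) _.
  by have := entry_le_opnorm (A j) ord0 ord0; have := entry_le_opnorm (A j) i1 i1; lra.
have := ler_pM (normr_ge0 _) (normr_ge0 _) trA trD.
rewrite -normrM ler_norml => /andP[cross_ge _].
have -> : \tr (D j) ^+ 2 = \tr (A j) ^+ 2 + 2 * (\tr (A j) * (\tr (D j) - \tr (A j))) +
  (\tr (D j) - \tr (A j)) ^+ 2 by ring.
have := sqr_ge0 (\tr (D j) - \tr (A j)); lra.
Qed.

(* The squared gap is tr^2 - 4 det; near A the determinant of D_j0 is frozen and
   the trace moves by O(delta), so the squared gap stays above half that of A_j0. *)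
Lemma ef_cond_near A (fA : eigenframe A) j0 : is_cocycle A -> `|ef_a fA j0| != 1 ->
  exists2 delta : R, 0 < delta <= 1 & exists K : R,
    forall D (f : eigenframe D), is_cocycle D -> cdist D A < delta -> ef_cond f <= K.
Proof.
move=> SL_A a_neq1; set a := opnorm (A j0); have a_ge0 : 0 <= a := opnorm_ge0 _.
set g := (ef_b fA j0 - ef_a fA j0) ^+ 2.
have g_gt0 : 0 < g.
  rewrite lt_neqAle sqr_ge0 andbT eq_sym sqrf_eq0 subr_eq0.
  apply: contra a_neq1 => /eqP ba; have := ef_ab fA j0; rewrite ba normrM => sq1.
  by apply/eqP; have := normr_ge0 (ef_a fA j0); nra.
set q := 16 * a / g; have q_ge0 : 0 <= q by apply: divr_ge0; [apply: mulr_ge0 | apply: ltW].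
set delta := (3 + 4 * a + q)^-1.
have delta_gt0 : 0 < delta by rewrite invr_gt0; lra.
have delta_den : delta * (3 + 4 * a + q) = 1 by rewrite mulVf //; lra.
have delta_g : 16 * (a * delta) <= g.
  have -> : 16 * (a * delta) = g * (q * delta) by rewrite /q; field; rewrite gt_eqF.
  by have := mulr_ge0 (ltW delta_gt0) a_ge0; nra.
exists delta; first by apply/andP; split => //; nra.
exists (2 * (a + 1) / Num.sqrt (g / 2)) => D f SL_D near.
have d_ge0 : 0 <= cdist D A := le_trans (normr_ge0 _) (entry_le_cdist D A j0 ord0 ord0).
have d_small : cdist D A * (3 + 4 * a + q) < delta * (3 + 4 * a + q).
  by rewrite ltr_pM2r //; lra.
rewrite delta_den in d_small.
have da_ge0 := mulr_ge0 d_ge0 a_ge0; have dq_ge0 := mulr_ge0 d_ge0 q_ge0.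
have d_le1 : cdist D A <= 1 by lra.
have detE : \det (D j0) = \det (A j0) by apply: det_near => //; rewrite -/a; lra.
have gap : g / 2 <= (ef_b f j0 - ef_a f j0) ^+ 2.
  rewrite ef_gap_sqr; apply: le_trans (disc_near detE).
  have : a * cdist D A <= a * delta by apply: ler_wpM2l => //; apply: ltW.
  have gE : g = \tr (A j0) ^+ 2 - 4 * \det (A j0) by rewrite /g ef_gap_sqr.
  rewrite -gE -/a; lra.
apply: le_trans (ef_cond_le_gap (j := j0) (s := Num.sqrt (g / 2)) _ _) _.
- by rewrite sqrtr_gt0 divr_gt0.
- by rewrite sqr_sqrtr // divr_ge0 // ltW.
apply: ler_wpM2r; first by rewrite invr_ge0 sqrtr_ge0.
by rewrite ler_pM2l // (le_trans (opnorm_near D A j0)) // lerD2l.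
Qed.

End NearCocycles.

Section Words.
Variable R : realType.
Variable k : nat.
Variable p : 'I_k -> R.
Hypothesis p_ge0 : forall i, 0 <= p i.
Hypothesis p_sum1 : \sum_(i < k) p i = 1.
Implicit Types (x : 'I_k -> R) (n : nat).

Definition mean x := \sum_j p j * x j.

Lemma meanN x : mean (fun j => - x j) = - mean x.
Proof. by rewrite /mean -sumrN; apply: eq_bigr => j _; rewrite mulrN. Qed.

Lemma mean_centered x : mean (fun j => x j - mean x) = 0.
Proof.
rewrite /mean (eq_bigr (fun j => p j * x j - mean x * p j)) => [|j _]; last first.
  by rewrite mulrBr [p j * mean _]mulrC.
by rewrite sumrB -mulr_sumr p_sum1 mulr1 subrr.
Qed.

Lemma abs_mean_le x B : (forall j, `|x j| <= B) -> `|mean x| <= B.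
Proof.
move=> xB; apply: le_trans (ler_norm_sum _ _ _) _.
rewrite -[X in _ <= X]mul1r -p_sum1 mulr_suml; apply: ler_sum => j _.
by rewrite normrM ger0_norm // ler_wpM2l.
Qed.

Lemma sum_tupleS n (F : n.+1.-tuple 'I_k -> R) :
  \sum_(w : n.+1.-tuple 'I_k) F w = \sum_j \sum_(w : n.-tuple 'I_k) F [tuple of j :: w].
Proof.
rewrite pair_big /= (reindex (fun q : 'I_k * n.-tuple 'I_k => [tuple of q.1 :: q.2])) //.
exists (fun t : n.+1.-tuple 'I_k => (thead t, [tuple of behead t])).
  by move=> [j w] _ /=; rewrite theadE; congr pair; apply: val_inj.
by move=> t _ /=; rewrite -tuple_eta.
Qed.

Lemma wprob_ge0 (w : seq 'I_k) : 0 <= wprob p w.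
Proof. exact: prodr_ge0. Qed.

Lemma En0 (f : 0.-tuple 'I_k -> R) : En p f = f [tuple].
Proof.
rewrite /En (big_pred1 [tuple]) => [|t]; last by apply/esym/eqP; apply: tuple0.
by rewrite /wprob big_nil mul1r.
Qed.

Lemma EnS n (f : n.+1.-tuple 'I_k -> R) :
  En p f = \sum_j p j * En p (fun w : n.-tuple 'I_k => f [tuple of j :: w]).
Proof.
rewrite /En sum_tupleS; apply: eq_bigr => j _; rewrite mulr_sumr.
by apply: eq_bigr => w _; rewrite /wprob big_cons mulrA.
Qed.

Lemma eq_En n (f g : n.-tuple 'I_k -> R) : f =1 g -> En p f = En p g.
Proof. by move=> fg; apply: eq_bigr => w _; rewrite fg. Qed.

Lemma ler_En n (f g : n.-tuple 'I_k -> R) :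
  (forall w, f w <= g w) -> En p f <= En p g.
Proof. by move=> fg; apply: ler_sum => w _; rewrite ler_wpM2l ?wprob_ge0. Qed.

Lemma EnD n (f g : n.-tuple 'I_k -> R) :
  En p (fun w => f w + g w) = En p f + En p g.
Proof. by rewrite /En -big_split; apply: eq_bigr => w _; rewrite mulrDr. Qed.

Lemma EnZ n c (f : n.-tuple 'I_k -> R) : En p (fun w => c * f w) = c * En p f.
Proof. by rewrite /En mulr_sumr; apply: eq_bigr => w _; rewrite mulrCA. Qed.

Lemma EnN n (f : n.-tuple 'I_k -> R) : En p (fun w => - f w) = - En p f.
Proof. by rewrite -mulN1r -EnZ; apply: eq_En => w; rewrite mulN1r. Qed.

Lemma EnB n (f g : n.-tuple 'I_k -> R) :
  En p (fun w => f w - g w) = En p f - En p g.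
Proof. by rewrite EnD EnN. Qed.

Lemma En_cst n c : En p (fun _ : n.-tuple 'I_k => c) = c.
Proof.
elim: n => [|n IHn]; first by rewrite En0.
rewrite EnS (eq_bigr (fun j => p j * c)) => [|j _]; last by rewrite IHn.
by rewrite -mulr_suml p_sum1 mul1r.
Qed.

Lemma ler_abs_En n (f : n.-tuple 'I_k -> R) : `|En p f| <= En p (fun w => `|f w|).
Proof.
rewrite ler_norml -EnN; apply/andP; split; apply: ler_En => w.
  by rewrite lerNl -normrN ler_norm.
exact: ler_norm.
Qed.

Lemma Pn_En n (E : n.-tuple 'I_k -> bool) : Pn p E = En p (fun w => (E w)%:R).
Proof.
rewrite /Pn /En big_mkcond; apply: eq_bigr => w _.
by case: (E w); rewrite ?mulr1 ?mulr0.
Qed.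

Lemma Pn_ge0 n (E : n.-tuple 'I_k -> bool) : 0 <= Pn p E.
Proof. by apply: sumr_ge0 => w _; apply: wprob_ge0. Qed.

Lemma eq_Pn n (E E' : n.-tuple 'I_k -> bool) : E =1 E' -> Pn p E = Pn p E'.
Proof. by move=> EE'; rewrite !Pn_En; apply: eq_En => w; rewrite EE'. Qed.

Lemma subset_Pn n (E E' : n.-tuple 'I_k -> bool) :
  (forall w, E w -> E' w) -> Pn p E <= Pn p E'.
Proof.
move=> EE'; rewrite !Pn_En; apply: ler_En => w.
by case: (boolP (E w)) => [/EE' ->|] //=; case: (E' w).
Qed.

Lemma Pn_pred0 n : Pn p (fun _ : n.-tuple 'I_k => false) = 0.
Proof. exact: big_pred0. Qed.

Lemma Pn_not n (E : n.-tuple 'I_k -> bool) : Pn p (fun w => ~~ E w) = 1 - Pn p E.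
Proof.
rewrite !Pn_En -[X in X - _](En_cst n 1) -EnB; apply: eq_En => w.
by case: (E w); rewrite /= ?subr0 ?subrr.
Qed.

Lemma Pn_or_le n (E E' : n.-tuple 'I_k -> bool) :
  Pn p (fun w => E w || E' w) <= Pn p E + Pn p E'.
Proof.
rewrite !Pn_En -EnD; apply: ler_En => w.
by case: (E w); case: (E' w); rewrite /= ?addr0 ?add0r ?lerDl.
Qed.

Lemma abs_wsum_le x W n (w : n.-tuple 'I_k) :
  (forall j, `|x j| <= W) -> `|\sum_(i <- w) x i| <= n%:R * W.
Proof.
move=> xW; case: w => s /= /eqP <-; elim: s => [|j s IHs].
  by rewrite big_nil normr0 mul0r.
rewrite big_cons /= -addn1 natrD mulrDl mul1r addrC.
by apply: le_trans (ler_normD _ _) _; apply: lerD.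
Qed.

Lemma wsum_shift x c n (w : n.-tuple 'I_k) :
  \sum_(i <- w) (x i - c) = \sum_(i <- w) x i - n%:R * c.
Proof.
case: w => s /= /eqP <-; elim: s => [|j s IHs]; first by rewrite !big_nil mul0r subr0.
by rewrite !big_cons IHs /= -addn1 natrD; ring.
Qed.

Lemma En_wsum x n : En p (fun w : n.-tuple 'I_k => \sum_(i <- w) x i) = n%:R * mean x.
Proof.
elim: n => [|n IHn]; first by rewrite En0 big_nil mul0r.
rewrite EnS (eq_bigr (fun j => p j * x j + p j * (n%:R * mean x))) => [|j _].
  by rewrite big_split /= -/(mean x) -mulr_suml p_sum1 mul1r -natr1; ring.
rewrite -mulrDr (eq_En (g := fun w => x j + \sum_(i <- w) x i)) => [|w].
  by rewrite EnD En_cst IHn.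
by rewrite /= big_cons.
Qed.

Lemma En_wsum_sqr x n : mean x = 0 ->
  En p (fun w : n.-tuple 'I_k => (\sum_(i <- w) x i) ^+ 2) =
  n%:R * mean (fun j => x j ^+ 2).
Proof.
move=> x0; elim: n => [|n IHn]; first by rewrite En0 big_nil expr0n mul0r.
rewrite EnS (eq_bigr (fun j => p j * x j ^+ 2 +
  p j * (n%:R * mean (fun j => x j ^+ 2)))) => [|j _].
  by rewrite big_split /= -/(mean _) -mulr_suml p_sum1 mul1r -natr1; ring.
rewrite -mulrDr (eq_En (g := fun w => x j ^+ 2 +
  ((\sum_(i <- w) x i) ^+ 2 + 2 * x j * \sum_(i <- w) x i))) => [|w].
  by rewrite !EnD En_cst IHn EnZ En_wsum x0 !mulr0 addr0.
by rewrite /= big_cons; ring.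
Qed.

Lemma En_expR_wsum x l n :
  En p (fun w : n.-tuple 'I_k => expR (l * \sum_(i <- w) x i)) =
  mean (fun j => expR (l * x j)) ^+ n.
Proof.
elim: n => [|n IHn]; first by rewrite En0 big_nil mulr0 expR0 expr0.
rewrite EnS exprS {1}/mean mulr_suml; apply: eq_bigr => j _.
rewrite (eq_En (g := fun w => expR (l * x j) * expR (l * \sum_(i <- w) x i))) => [|w].
  by rewrite EnZ IHn mulrA.
by rewrite /= big_cons mulrDr expRD.
Qed.

Lemma chernoff x n y l : 0 <= l ->
  Pn p (fun w : n.-tuple 'I_k => y < \sum_(i <- w) x i) <=
  expR (- (l * y)) * mean (fun j => expR (l * x j)) ^+ n.
Proof.
move=> l_ge0; rewrite -En_expR_wsum -EnZ Pn_En; apply: ler_En => w; rewrite -expRD.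
case: ltrP => [y_lt|_] /=; last exact: expR_ge0.
by rewrite -expR0 ler_expR addrC -mulrBr mulr_ge0 // subr_ge0 ltW.
Qed.

End Words.

Lemma expR_le_quad (R : realType) (z : R) : `|z| <= 1 / 2 -> expR z <= 1 + z + 2 * z ^+ 2.
Proof.
rewrite ler_norml => /andP[z_ge z_le].
have e1 := expR_ge1Dx (- z).
have eN : expR z * expR (- z) = 1 by rewrite expRN mulfV // gt_eqF // expR_gt0.
have e_gt0 := expR_gt0 z.
have : expR z * (1 - z) <= 1 by rewrite -eN; apply: ler_wpM2l; [exact: ltW | lra].
have : 1 <= (1 + z + 2 * z ^+ 2) * (1 - z).
  have -> : (1 + z + 2 * z ^+ 2) * (1 - z) = 1 + z ^+ 2 * (1 - 2 * z) by ring.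
  by rewrite lerDl mulr_ge0 ?sqr_ge0 //; lra.
nra.
Qed.

Definition clamp (R : realType) (a b z : R) := if z < a then a else if b < z then b else z.

Lemma clamp_shift (R : realType) (a b x z : R) :
  clamp a b (x + z) = x + clamp (a - x) (b - x) z.
Proof.
rewrite /clamp ltrBrDl ltrBlDl.
by case: ifP => _; [|case: ifP => _]; rewrite ?subrKC.
Qed.

Lemma clamp_increment_le (R : realType) (a b W x z : R) : a <= b -> `|x| <= W ->
  x * (clamp a b (x + z) - clamp a b z) <= W ^+ 2 * (a - W <= x + z <= b + W)%R%:R.
Proof.
rewrite ler_norml /clamp => ab /andP[xl xu].
case: (lerP (a - W) (x + z)) => w1; case: (lerP (x + z) (b + W)) => w2 /=;
case: (ltP (x + z) a) => h1; case: (ltP b (x + z)) => h2;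
case: (ltP z a) => h3; case: (ltP b z) => h4; rewrite ?mulr1 ?mulr0; nra.
Qed.

Lemma abs_le_amgm (R : realType) (s r : R) : 0 < r -> `|s| <= (s ^+ 2 / r + r) / 2.
Proof.
move=> r_gt0; rewrite -subr_ge0.
have -> : (s ^+ 2 / r + r) / 2 - `|s| = (`|s| - r) ^+ 2 / (2 * r).
  by rewrite -[s ^+ 2]real_normK ?num_real //; field; rewrite gt_eqF.
by rewrite divr_ge0 ?sqr_ge0 // mulr_ge0 // ltW.
Qed.

Lemma clamp_mul_ge (R : realType) (y W s : R) : 0 <= W -> 0 < y ->
  y ^+ 2 * (y + W < `|s|)%R%:R <= s * clamp (- y) y s.
Proof.
move=> W_ge0 y_gt0; rewrite /clamp.
case: (ltrP (y + W) `|s|) => [big|_]; rewrite ?mulr1 ?mulr0;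
  case: (ltrP s (- y)) => s_lo; case: (ltrP y s) => s_hi; try nra.
rewrite -expr2 -[s ^+ 2]real_normK ?num_real // ler_sqr ?nnegrE ?normr_ge0 ?(ltW y_gt0) //.
lra.
Qed.

Lemma tail_le_of_stein_hoeffding (R : realType) (T t : R) : 0 <= t -> 0 <= T ->
  T * (1 + t) <= 1 -> T <= 2 * expR (- (t / 8)) -> T <= expR (- (t / 24)).
Proof.
move=> t_ge0 T_ge0 stein hoeff; case: (lerP t 12) => t_le.
  have e_ge : 1 - t / 24 <= expR (- (t / 24)) by have := expR_ge1Dx (- (t / 24)); lra.
  have : 1 <= (1 + t) * expR (- (t / 24)).
    by apply: le_trans (_ : (1 + t) * (1 - t / 24) <= _); [nra | apply: ler_wpM2l; lra].
  have := expR_gt0 (- (t / 24)); nra.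
have split8 : expR (- (t / 8)) = expR (- (t / 24)) * expR (- (t / 12)).
  by rewrite -expRD; congr expR; field.
have half : expR (- (t / 12)) <= 1 / 2.
  rewrite expRN -[X in _ <= X]invf_div divr1 lef_pV2 ?posrE ?expR_gt0 //.
  by apply: le_trans (expR_ge1Dx _); lra.
rewrite split8 in hoeff; have := expR_gt0 (- (t / 24)); nra.
Qed.

Section Concentration.
Variable R : realType.
Variable k : nat.
Variable p : 'I_k -> R.
Hypothesis p_ge0 : forall i, 0 <= p i.
Hypothesis p_sum1 : \sum_(i < k) p i = 1.

Section Centered.
Variables (x : 'I_k -> R) (W : R).
Hypothesis x_mean0 : mean p x = 0.
Hypothesis x_le : forall j, `|x j| <= W.

Lemma mean_expR_le l : 0 <= l -> l * W <= 1 / 2 ->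
  mean p (fun j => expR (l * x j)) <= expR (2 * l ^+ 2 * W ^+ 2).
Proof.
move=> l_ge0 lW.
have x_sqr j : x j ^+ 2 <= W ^+ 2.
  by rewrite -real_normK ?num_real // ler_sqr ?nnegrE // (le_trans _ (x_le j)).
apply: le_trans (_ : mean p (fun j => 1 + l * x j + 2 * (l ^+ 2 * W ^+ 2)) <= _).
  apply: ler_sum => j _; apply: ler_wpM2l => //.
  apply: le_trans (expR_le_quad _) _.
    by rewrite normrM ger0_norm // (le_trans _ lW) // ler_wpM2l.
  by rewrite lerD2l exprMn ler_wpM2l ?mulr_ge0 ?sqr_ge0 // ler_wpM2l ?sqr_ge0.
rewrite /mean (eq_bigr (fun j => p j + l * (p j * x j) + p j * (2 * (l ^+ 2 * W ^+ 2))));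
  last by move=> j _; ring.
rewrite !big_split /= -mulr_sumr -/(mean p x) x_mean0 mulr0 addr0 -mulr_suml p_sum1 mul1r.
by apply: le_trans (expR_ge1Dx _); rewrite mulrA.
Qed.

Lemma hoeffding n y : 0 < y ->
  Pn p (fun w : n.-tuple 'I_k => y < \sum_(i <- w) x i) <=
  expR (- (y ^+ 2 / (8 * n%:R * W ^+ 2))).
Proof.
move=> y_gt0; case: (ltrP (n%:R * W) y) => [nW_lt|y_le].
  apply: le_trans (_ : Pn p (fun _ : n.-tuple 'I_k => false) <= _).
    apply: subset_Pn => // w; have := abs_wsum_le w x_le; rewrite ler_norml.
    by case/andP => _; lra.
  by rewrite Pn_pred0 ltW // expR_gt0.
have nW_gt0 : 0 < n%:R * W := lt_le_trans y_gt0 y_le.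
have n_ge0 : 0 <= n%:R :> R := ler0n _ n.
have W_gt0 : 0 < W.
  by rewrite ltNge; apply/negP => W_le0; have := mulr_ge0_le0 n_ge0 W_le0; lra.
have n_gt0 : 0 < n%:R :> R.
  by rewrite ltNge; apply/negP => n_le0; have := mulr_le0_ge0 n_le0 (ltW W_gt0); lra.
set l := y / (4 * n%:R * W ^+ 2).
have l_ge0 : 0 <= l by rewrite divr_ge0 ?ltW // !mulr_gt0 ?exprn_gt0.
have lW : l * W <= 1 / 2.
  have -> : l * W = y / (n%:R * W) / 4.
    by rewrite /l; field; rewrite (gt_eqF W_gt0) (gt_eqF n_gt0).
  have : y / (n%:R * W) <= 1 by rewrite ler_pdivrMr ?mul1r.
  lra.
apply: le_trans (chernoff p_ge0 _ _ _ l_ge0) _.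
apply: le_trans (_ : expR (- (l * y)) * expR (2 * l ^+ 2 * W ^+ 2) ^+ n <= _).
  apply: ler_wpM2l; first exact: expR_ge0.
  apply: lerXn2r; rewrite ?nnegrE ?expR_ge0 ?mean_expR_le //.
  by apply: sumr_ge0 => j _; rewrite mulr_ge0 ?expR_ge0.
rewrite -expRM_natl -expRD.
suff -> : - (l * y) + n%:R * (2 * l ^+ 2 * W ^+ 2) = - (y ^+ 2 / (8 * n%:R * W ^+ 2)) by [].
by rewrite /l; field; rewrite (gt_eqF W_gt0) (gt_eqF n_gt0).
Qed.

(* Proved by peeling off the first letter j: the increment
   clamp (x_j + S) - clamp S is at most |x_j| <= W in size and vanishes unless
   x_j + S is within W of [a, b], while the remaining terms have zero mean. *)
Definition stein_clamp_bound n := forall a b, a <= b ->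
  En p (fun w : n.-tuple 'I_k => (\sum_(i <- w) x i) * clamp a b (\sum_(i <- w) x i)) <=
  n%:R * W ^+ 2 * Pn p (fun w : n.-tuple 'I_k => a - W <= \sum_(i <- w) x i <= b + W).

Lemma stein_clamp_step n a b j : stein_clamp_bound n -> a <= b ->
  En p (fun w : n.-tuple 'I_k =>
    (x j + \sum_(i <- w) x i) * clamp a b (x j + \sum_(i <- w) x i)) <=
  x j * En p (fun w : n.-tuple 'I_k => clamp a b (\sum_(i <- w) x i)) +
  n.+1%:R * W ^+ 2 *
    Pn p (fun w : n.-tuple 'I_k => a - W <= x j + \sum_(i <- w) x i <= b + W).
Proof.
move=> IHn ab; set S := fun w : n.-tuple 'I_k => \sum_(i <- w) x i.
rewrite (eq_En p (g := fun w => x j * (clamp a b (x j + S w) - clamp a b (S w)) +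
  x j * clamp a b (S w) + (x j * S w + S w * clamp (a - x j) (b - x j) (S w)))); last first.
  by move=> w; rewrite /S /= clamp_shift; ring.
rewrite !EnD !EnZ En_wsum // x_mean0 !mulr0 add0r.
have shifted := IHn (a - x j) (b - x j) (lerB ab (lexx _)).
have shiftE : Pn p (fun w : n.-tuple 'I_k => a - x j - W <= S w <= b - x j + W) =
    Pn p (fun w : n.-tuple 'I_k => a - W <= x j + S w <= b + W).
  by apply: eq_Pn => w; rewrite addrAC lerBlDl [b - x j + W]addrAC lerBrDl.
rewrite shiftE in shifted.
have incr : x j * En p (fun w => clamp a b (x j + S w) - clamp a b (S w)) <=
    W ^+ 2 * Pn p (fun w : n.-tuple 'I_k => a - W <= x j + S w <= b + W).
  rewrite Pn_En -!EnZ; apply: ler_En => // w; exact: clamp_increment_le.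
rewrite -natr1 mulrDl mul1r mulrDl; lra.
Qed.

Lemma stein_clampP n : stein_clamp_bound n.
Proof.
elim: n => [|n IHn] a b ab; first by rewrite En0 big_nil !mul0r.
set Ec := En p (fun w : n.-tuple 'I_k => clamp a b (\sum_(i <- w) x i)).
pose P j := Pn p (fun w : n.-tuple 'I_k => a - W <= x j + \sum_(i <- w) x i <= b + W).
rewrite EnS; apply: le_trans (_ : \sum_j p j * (x j * Ec + n.+1%:R * W ^+ 2 * P j) <= _).
  apply: ler_sum => j _; apply: ler_wpM2l => //.
  apply: le_trans (stein_clamp_step j IHn ab); apply: ler_En => // w.
  by rewrite /= big_cons.
have -> : \sum_j p j * (x j * Ec + n.+1%:R * W ^+ 2 * P j) =
    mean p x * Ec + n.+1%:R * W ^+ 2 * \sum_j p j * P j.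
  by rewrite /mean mulr_suml mulr_sumr -big_split; apply: eq_bigr => j _ /=; ring.
rewrite x_mean0 mul0r add0r; apply: ler_wpM2l; first by rewrite mulr_ge0 ?sqr_ge0.
rewrite [X in _ <= X]Pn_En EnS; apply: ler_sum => j _; rewrite /P Pn_En.
by apply: ler_wpM2l => //; apply: ler_En => // w; rewrite /= big_cons.
Qed.

Lemma stein_tail n y : 0 <= W -> 0 < y ->
  Pn p (fun w : n.-tuple 'I_k => y + W < `|\sum_(i <- w) x i|) * (n%:R * W ^+ 2 + y ^+ 2) <=
  n%:R * W ^+ 2.
Proof.
move=> W_ge0 y_gt0; set T := Pn p _.
have inside : Pn p (fun w : n.-tuple 'I_k => - y - W <= \sum_(i <- w) x i <= y + W) = 1 - T.
  rewrite -(Pn_not p_sum1); apply: eq_Pn => w.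
  by rewrite -opprD -ler_norml leNgt.
have ab : - y <= y by lra.
have up := stein_clampP n ab.
rewrite inside in up.
have lo : y ^+ 2 * T <= En p (fun w : n.-tuple 'I_k =>
    (\sum_(i <- w) x i) * clamp (- y) y (\sum_(i <- w) x i)).
  by rewrite /T Pn_En -EnZ; apply: ler_En => // w; apply: clamp_mul_ge.
have := Pn_ge0 p_ge0 (fun w : n.-tuple 'I_k => y + W < `|\sum_(i <- w) x i|); rewrite -/T.
nra.
Qed.

Lemma En_abs_wsum_le n r : 0 < r ->
  En p (fun w : n.-tuple 'I_k => `|\sum_(i <- w) x i|) <= (n%:R * W ^+ 2 / r + r) / 2.
Proof.
move=> r_gt0.
apply: le_trans (_ : En p (fun w : n.-tuple 'I_k =>
  ((\sum_(i <- w) x i) ^+ 2 / r + r) / 2) <= _).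
  by apply: ler_En => // w; apply: abs_le_amgm.
rewrite (eq_En p (g := fun w => 2^-1 * (r^-1 * (\sum_(i <- w) x i) ^+ 2 + r))) => [|w].
  rewrite EnZ EnD EnZ En_cst // En_wsum_sqr // mulrC.
  apply: ler_wpM2r; first by rewrite invr_ge0 ler0n.
  rewrite lerD2r mulrC; apply: ler_wpM2r; first by rewrite invr_ge0 ltW.
  apply: ler_wpM2l; first exact: ler0n.
  have x_sqr_le j : `|x j ^+ 2| <= W ^+ 2.
    by rewrite normrX lerXn2r ?nnegrE // (le_trans _ (x_le j)).
  exact: le_trans (ler_norm _) (abs_mean_le p_ge0 p_sum1 x_sqr_le).
by rewrite mulrC [_ ^+ 2 / r]mulrC.
Qed.

End Centered.

Lemma hoeffding_abs x W n y : mean p x = 0 -> (forall j, `|x j| <= W) -> 0 < y ->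
  Pn p (fun w : n.-tuple 'I_k => y < `|\sum_(i <- w) x i|) <=
  2 * expR (- (y ^+ 2 / (8 * n%:R * W ^+ 2))).
Proof.
move=> x_mean0 x_le y_gt0; apply: le_trans (_ : Pn p (fun w : n.-tuple 'I_k =>
  (y < \sum_(i <- w) x i) || (y < \sum_(i <- w) - x i)) <= _).
  by apply: subset_Pn => // w; rewrite sumrN ltr_normr.
apply: le_trans (Pn_or_le p_ge0 _ _) _; rewrite -[2 * _]/(2%:R * _) mulr_natl mulr2n.
apply: lerD; apply: hoeffding => // [|j]; last by rewrite normrN.
by rewrite meanN x_mean0 oppr0.
Qed.

Lemma concentration x W n y : mean p x = 0 -> (forall j, `|x j| <= W) ->
  0 < W -> (0 < n)%N -> 0 < y ->
  Pn p (fun w : n.-tuple 'I_k => y + W < `|\sum_(i <- w) x i|) <=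
  expR (- (y ^+ 2 / (24 * n%:R * W ^+ 2))).
Proof.
move=> x_mean0 x_le W_gt0 n_gt0 y_gt0; set T := Pn p _.
have nR_gt0 : 0 < n%:R :> R by rewrite ltr0n.
have nW_gt0 : 0 < n%:R * W ^+ 2 by rewrite mulr_gt0 ?exprn_gt0.
set t := y ^+ 2 / (n%:R * W ^+ 2).
have t_ge0 : 0 <= t by rewrite divr_ge0 ?sqr_ge0 ?ltW.
have stein : T * (1 + t) <= 1.
  have -> : T * (1 + t) = T * (n%:R * W ^+ 2 + y ^+ 2) / (n%:R * W ^+ 2).
    by rewrite /t; field; rewrite (gt_eqF W_gt0) (gt_eqF nR_gt0).
  by rewrite ler_pdivrMr // mul1r stein_tail // ltW.
have hoeff : T <= 2 * expR (- (t / 8)).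
  apply: le_trans (_ : Pn p (fun w : n.-tuple 'I_k => y < `|\sum_(i <- w) x i|) <= _).
    by apply: subset_Pn => // w; apply: le_lt_trans; rewrite lerDl ltW.
  have -> : t / 8 = y ^+ 2 / (8 * n%:R * W ^+ 2).
    by rewrite /t; field; rewrite (gt_eqF W_gt0) (gt_eqF nR_gt0).
  exact: hoeffding_abs.
have -> : y ^+ 2 / (24 * n%:R * W ^+ 2) = t / 24.
  by rewrite /t; field; rewrite (gt_eqF W_gt0) (gt_eqF nR_gt0).
by apply: tail_le_of_stein_hoeffding => //; apply: Pn_ge0.
Qed.

End Concentration.

Section Lyapunov.
Variable R : realType.
Variable k : nat.
Variable p : 'I_k -> R.
Hypothesis p_ge0 : forall i, 0 <= p i.
Hypothesis p_sum1 : \sum_(i < k) p i = 1.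
Variables (D : 'I_k -> 'M[R]_2) (f : eigenframe D).

Lemma ef_cond_ge1 : 1 <= ef_cond f.
Proof.
have d_gt0 : 0 < `|det2 (ef_u f) (ef_v f)| by rewrite normr_gt0 ef_det.
by rewrite /ef_cond ler_pdivlMr // mul1r det2_le_vnorm.
Qed.

Lemma ln_two_ef_cond_ge0 : 0 <= ln (2 * ef_cond f).
Proof. by apply: ln_ge0; have := ef_cond_ge1; lra. Qed.

Lemma ln_opnorm_cprod_dev n (w : n.-tuple 'I_k) :
  `|ln (opnorm (cprod D w)) - n%:R * `|mean p (ef_rate f)| | <=
  `|\sum_(i <- w) (ef_rate f i - mean p (ef_rate f))| + ln (2 * ef_cond f).
Proof.
have lo := ln_opnorm_cprod_ge f w; have hi := ln_opnorm_cprod_le f w.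
have := ler_dist_dist (\sum_(i <- w) ef_rate f i) (n%:R * mean p (ef_rate f)).
rewrite wsum_shift normrM normr_nat ler_norml => /andP[d_lo d_hi].
have := ln_two_ef_cond_ge0; rewrite ler_norml; lra.
Qed.

Lemma En_ln_opnorm_cprod_dev W n r :
  (forall j, `|ef_rate f j - mean p (ef_rate f)| <= W) -> 0 < r ->
  `|En p (fun w : n.-tuple 'I_k => ln (opnorm (cprod D w))) - n%:R * `|mean p (ef_rate f)| |
    <= ln (2 * ef_cond f) + (n%:R * W ^+ 2 / r + r) / 2.
Proof.
move=> xW r_gt0; rewrite -[X in `|_ - X|](En_cst p_sum1 n) -EnB.
apply: le_trans (ler_abs_En p_ge0 _) _.
apply: le_trans (ler_En p_ge0 (@ln_opnorm_cprod_dev n)) _.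
rewrite EnD En_cst // addrC lerD2l.
by apply: (En_abs_wsum_le p_ge0 p_sum1 _ xW) => //; apply: mean_centered.
Qed.

Lemma Lyap_eigenframe : Lyap p D = `|mean p (ef_rate f)|.
Proof.
set mu := mean p (ef_rate f); set kap := ln (2 * ef_cond f).
pose W := \sum_j `|ef_rate f j - mu| + 1.
have W_gt0 : 0 < W by rewrite ltr_pwDr // sumr_ge0.
have xW j : `|ef_rate f j - mu| <= W.
  by rewrite /W (bigD1 j) //= -addrA lerDl addr_ge0 // sumr_ge0.
apply: cvg_lim => //; apply/cvgrPdist_le => e e_gt0.
set r := W ^+ 2 / e; have r_gt0 : 0 < r by rewrite divr_gt0 ?exprn_gt0.
have kap_ge0 : 0 <= kap := ln_two_ef_cond_ge0.
set N := Num.Def.archi_bound ((kap + r / 2) * 2 / e).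
have N_gt : (kap + r / 2) * 2 / e < N%:R.
  by apply: archi_boundP; rewrite !mulr_ge0 ?invr_ge0 ?ltW //; lra.
exists N => // n /= N_le; set m : R := n.+1%:R.
have m_gt0 : 0 < m by rewrite ltr0n.
have N_m : N%:R <= m by rewrite ler_nat (leq_trans N_le).
have := En_ln_opnorm_cprod_dev n.+1 xW r_gt0; rewrite -/m -/kap => dev.
rewrite -normrN opprB -[X in `|_ - X|](mulKf (lt0r_neq0 m_gt0)) -mulrBr normrM.
rewrite ger0_norm ?invr_ge0 ?(ltW m_gt0) // ler_pdivrMl //.
apply: le_trans dev _.
have -> : m * W ^+ 2 / r = m * e by rewrite /r; field; rewrite !gt_eqF // exprn_gt0.
have : (kap + r / 2) * 2 <= m * e by rewrite -ler_pdivrMr //; lra.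
lra.
Qed.

Lemma ef_expanding_of_Lyap_gt0 : 0 < Lyap p D -> exists j, `|ef_a f j| != 1.
Proof.
rewrite Lyap_eigenframe normr_gt0 => mu_neq0.
have [j rate_neq0] : exists j, ef_rate f j != 0.
  apply/existsP; rewrite -negb_forall; apply: contra mu_neq0 => /forallP rate0.
  by rewrite /mean big1 // => j _; rewrite (eqP (rate0 j)) mulr0.
by exists j; apply: contra rate_neq0 => /eqP a1; rewrite /ef_rate a1 ln1.
Qed.

Lemma Pn_ln_opnorm_dev_le B kap eps n :
  0 <= B -> (forall j, `|ef_rate f j| <= B) -> ln (2 * ef_cond f) <= kap ->
  0 < eps -> 2 * kap + 2 * (2 * B + 1) + 1 <= n%:R * eps ->
  Pn p (fun w : n.-tuple 'I_k =>
          eps < `|n%:R^-1 * ln (opnorm (cprod D w)) - Lyap p D|) <=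
  expR (- (eps ^+ 2 * n%:R / (96 * (2 * B + 1) ^+ 2))).
Proof.
move=> B_ge0 rate_le cond_le eps_gt0 n_large; rewrite Lyap_eigenframe.
set mu := mean p (ef_rate f); have W_gt0 : 0 < 2 * B + 1 by lra.
have kap_ge0 : 0 <= kap := le_trans ln_two_ef_cond_ge0 cond_le.
have mu_le : `|mu| <= B := abs_mean_le p_ge0 p_sum1 rate_le.
have xW j : `|ef_rate f j - mu| <= 2 * B + 1.
  by apply: le_trans (ler_normB _ _) _; have := rate_le j; lra.
have nR_gt0 : 0 < n%:R :> R.
  by rewrite ltNge; apply/negP => n_le0; have := mulr_le0_ge0 n_le0 (ltW eps_gt0); lra.
have n_gt0 : (0 < n)%N by rewrite -(ltr0n R).
set y := n%:R * eps / 2; have y_gt0 : 0 < y by rewrite !mulr_gt0.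
apply: le_trans (_ : Pn p (fun w : n.-tuple 'I_k =>
    y + (2 * B + 1) < `|\sum_(i <- w) (ef_rate f i - mu)|) <= _).
  apply: subset_Pn => // w dev; have := ln_opnorm_cprod_dev w; rewrite -/mu.
  set F := ln _ in dev *.
  have : n%:R * eps < `|F - n%:R * `|mu| |.
    have -> : F - n%:R * `|mu| = n%:R * (n%:R^-1 * F - `|mu|).
      by field; rewrite lt0r_neq0.
    by rewrite normrM (ger0_norm (ltW nR_gt0)) ltr_pM2l.
  rewrite /y; lra.
apply: le_trans (concentration p_ge0 p_sum1 (mean_centered p_sum1 _) xW W_gt0 n_gt0 y_gt0) _.
suff -> : y ^+ 2 / (24 * n%:R * (2 * B + 1) ^+ 2) =
  eps ^+ 2 * n%:R / (96 * (2 * B + 1) ^+ 2) by [].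
by rewrite /y; field; rewrite (lt0r_neq0 W_gt0) (lt0r_neq0 nR_gt0).
Qed.

End Lyapunov.

Unset Implicit Arguments.

Theorem theorem2p8 (R : realType) (k : nat) (p : 'I_k -> R)
    (hp : forall i, 0 < p i) (hsum : \sum_(i < k) p i = 1)
    (A : 'I_k -> 'M[R]_2) (hA : Diag A) (hL : 0 < Lyap p A) :
  exists delta c C : R, 0 < delta /\ 0 < c /\
    forall D : 'I_k -> 'M[R]_2, Diag D -> cdist D A < delta ->
    forall eps : R, 0 < eps ->
    forall n : nat, C / eps <= n%:R ->
      Pn p (fun w : n.-tuple 'I_k =>
              `| n%:R^-1 * ln (opnorm (cprod D w)) - Lyap p D | > eps)
        <= expR (- (c * eps ^+ 2 * n%:R)).
Proof.
have p_ge0 i : 0 <= p i := ltW (hp i).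
have [fA] := Diag_eigenframe hA.
have [j0 a_neq1] := ef_expanding_of_Lyap_gt0 p_ge0 hsum fA hL.
have [delta /andP[delta_gt0 delta_le1] [K condK]] := ef_cond_near hA.1 a_neq1.
pose B := ln (\sum_i opnorm (A i) + 1).
have B_ge0 : 0 <= B by rewrite ln_ge0 // lerDr sumr_ge0 // => i _; apply: opnorm_ge0.
pose kap := `|ln (2 * K)|.
exists delta, (96 * (2 * B + 1) ^+ 2)^-1, (2 * kap + 2 * (2 * B + 1) + 1).
split=> //; split; first by rewrite invr_gt0 mulr_gt0 // exprn_gt0 //; lra.
move=> D hD near eps eps_gt0 n n_large; have [f] := Diag_eigenframe hD.
apply: le_trans (Pn_ln_opnorm_dev_le (f := f) (kap := kap) p_ge0 hsum B_ge0 _ _ eps_gt0 _) _.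
- by move=> j; apply: ef_rate_near; apply: ltW (lt_le_trans near delta_le1).
- have cond_le := condK D f hD.1 near; have cond_gt0 := ef_cond_gt0 f.
  by apply: le_trans (ler_norm _); rewrite ler_ln ?posrE; lra.
- by rewrite -ler_pdivrMr.
by rewrite mulrC mulrA.
Qed.
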